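(* Let $C\subseteq[n]$ be a nonempty proper subset and let $\ket{\psi}=\ket{a}_C\otimes\ket{b}_{\overline{C}}$ be an $n$-qubit state, where $\ket{a}_C$ and $\ket{b}_{\overline{C}}$ are each $\epsilon$-far from every multipartite product state. There is an algorithm (not necessarily time-efficient) which, given $m=O(n/\epsilon^2)$ copies of $\ket{\psi}$, identifies the cut $C$ (i.e. outputs $C$ or $\overline{C}$) with probability at least $99\%$.
   Context: A state on a set $Q$ of qubits is multipartite product if it equals $\ket{a'}_D\otimes\ket{b'}_{Q\setminus D}$ for some nonempty proper $D\subsetneq Q$; a pure state $\ket{\phi}$ is $\epsilon$-far from a set $\mathcal{P}$ if $|\langle\phi|\chi\rangle|^2\le1-\epsilon^2$ for all $\ket{\chi}\in\mathcal{P}$. $\overline{C}=[n]\setminus C$. *)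

From HB Require Import structures.
From mathcomp Require Import all_boot all_order all_algebra.
From mathcomp Require Import complex reals.
Set Implicit Arguments. Unset Strict Implicit. Unset Printing Implicit Defensive.
Import Order.TTheory GRing.Theory Num.Theory.
Local Open Scope ring_scope.
Local Open Scope complex_scope.

Section Quantum.
Variable R : realType.
Local Notation C := (complex R).

(* A (not necessarily normalised) vector in the Hilbert space of a finite set
   Q of qubits: a function from computational basis strings {0,1}^Q to C. *)
Definition qvec (Q : finType) := {ffun Q -> bool} -> C.

Definition sub (Q : finType) (D : {set Q}) : finType := {x : Q | x \in D}.

Definition restr (Q : finType) (D : {set Q}) (x : {ffun Q -> bool})
  : {ffun sub D -> bool} := [ffun i => x (val i)].

Definition inner (T : finType) (u v : T -> C) : C :=
  \sum_(x : T) (u x)^* * v x.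

Definition is_state (Q : finType) (phi : qvec Q) : Prop :=
  inner phi phi = 1.

Definition tensor (Q : finType) (D : {set Q}) (a : qvec (sub D))
  (b : qvec (sub (~: D))) : qvec Q :=
  fun x => a (restr D x) * b (restr (~: D) x).

Definition multipartite_product (Q : finType) (chi : qvec Q) : Prop :=
  is_state chi /\
  exists D : {set Q}, [/\ D != set0, D != setT &
    exists (a' : qvec (sub D)) (b' : qvec (sub (~: D))), chi = tensor a' b'].

Definition far_from_product (Q : finType) (eps : R) (phi : qvec Q) : Prop :=
  forall chi : qvec Q, multipartite_product chi ->
    `|inner phi chi| ^+ 2 <= 1 - (eps ^+ 2)%:C.

(* m copies: basis of ((C^2)^{(x)n})^{(x)m} indexed by m-tuples of strings *)
Definition copies_idx (n m : nat) : finType :=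
  {ffun 'I_m -> {ffun 'I_n -> bool}}.

Definition tensor_pow (n m : nat) (psi : qvec 'I_n) : copies_idx n m -> C :=
  fun X => \prod_(k < m) psi (X k).

Definition psd (T : finType) (E : T -> T -> C) : Prop :=
  forall v : T -> C, 0 <= \sum_(x : T) \sum_(y : T) (v x)^* * E x y * v y.

Definition povm (T O : finType) (E : O -> T -> T -> C) : Prop :=
  (forall o, psd (E o)) /\
  (forall x y, \sum_(o : O) E o x y = (x == y)%:R).

Definition outcome_prob (T O : finType) (E : O -> T -> T -> C) (o : O)
  (v : T -> C) : C :=
  \sum_(x : T) \sum_(y : T) (v x)^* * E o x y * v y.

End Quantum.

(* For a candidate cut S of the n qubits, the swap test that exchanges the S-parts of two
   copies of psi accepts with probability (1 + Tr rho_S^2) / 2.  If S is C or its complement,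
   psi is a product across S and the test always accepts.  Any other nonempty proper S cuts a
   or b nontrivially, and because a and b are eps-far from product states the squared overlap
   of, say, a with a product state across that cut -- the largest eigenvalue of the reduced
   state -- is at most 1 - eps^2; hence Tr rho_S^2 <= 1 - eps^2 and the test accepts with
   probability at most 1 - eps^2/2, and at most delta = (1 - eps^2/2)^q when repeated on q
   pairs of copies.  Run these projective tests for all 2^n candidate cuts one after the
   other and output the first cut that is accepted.  Each earlier test moves the state by at
   most sqrt(delta) in norm, so the first of C and its complement is reached and accepted with
   probability at least 1 - O(4^n delta), which is 99% for q = O(n / eps^2). *)

From HB Require Import structures.
From mathcomp Require Import all_boot all_order all_algebra.
From mathcomp Require Import complex reals.
From mathcomp Require Import ring lra.
From Stdlib Require Import FunctionalExtensionality.
Import Order.TTheory GRing.Theory Num.Theory.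
Set Implicit Arguments. Unset Strict Implicit. Unset Printing Implicit Defensive.
Local Open Scope complex_scope.
Local Open Scope ring_scope.

Section SquaredModulus.
Variable R : realType.
Implicit Types (z w : complex R) (r s : R).

(* The generic [rmorph*] lemmas cannot be used right to left on [_%:C]: unification does not
   find the morphism structure of [real_complex]. *)
Lemma real_complex_inj r s : r%:C = s%:C :> complex R -> r = s.
Proof. exact: complexI. Qed.

Lemma real_complexD r s : (r + s)%:C = r%:C + s%:C :> complex R.
Proof. exact: rmorphD. Qed.

Lemma real_complexM r s : (r * s)%:C = r%:C * s%:C :> complex R.
Proof. exact: rmorphM. Qed.

Lemma real_complexX r k : (r ^+ k)%:C = r%:C ^+ k :> complex R.
Proof. exact: rmorphXn. Qed.

Definition sqnormc z : R := complex.Re z ^+ 2 + complex.Im z ^+ 2.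

Lemma sqnormcE z : z^* * z = (sqnormc z)%:C.
Proof. by rewrite add_Re2_Im2 sqr_normc mulrC. Qed.

Lemma sqnormc_ge0 z : 0 <= sqnormc z.
Proof. by rewrite addr_ge0 ?sqr_ge0. Qed.

Lemma sqnormc_eq0 z : sqnormc z = 0 -> z = 0.
Proof.
case: z => a b; rewrite /sqnormc /= => /eqP.
by rewrite paddr_eq0 ?sqr_ge0 // !sqrf_eq0 => /andP[/eqP-> /eqP->].
Qed.

Lemma sqnormcJ z : sqnormc z^* = sqnormc z.
Proof. by case: z => a b; rewrite /sqnormc /= sqrrN. Qed.

Lemma sqnormcN z : sqnormc (- z) = sqnormc z.
Proof. by case: z => a b; rewrite /sqnormc /= !sqrrN. Qed.

Lemma sqnormcM z w : sqnormc (z * w) = sqnormc z * sqnormc w.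
Proof. by case: z => a b; case: w => c d; rewrite /sqnormc /=; ring. Qed.

Lemma sqnormc_real r : sqnormc r%:C = r ^+ 2.
Proof. by rewrite /sqnormc /= expr0n addr0. Qed.

(* Young's inequality for the cross term [2 Re(z^* w)]. *)
Lemma sqnormcD_le (t : R) z w : 0 < t ->
  sqnormc (z + w) <= (1 + t) * sqnormc z + (1 + t^-1) * sqnormc w.
Proof.
move=> t_gt0; case: z => a1 a2; case: w => b1 b2; rewrite /sqnormc /=.
rewrite -subr_ge0.
have -> : (1 + t) * (a1 ^+ 2 + a2 ^+ 2) + (1 + t^-1) * (b1 ^+ 2 + b2 ^+ 2)
   - ((a1 + b1) ^+ 2 + (a2 + b2) ^+ 2)
   = t^-1 * ((t * a1 - b1) ^+ 2 + (t * a2 - b2) ^+ 2).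
  by field; rewrite gt_eqF.
by rewrite mulr_ge0 ?addr_ge0 ?sqr_ge0 // invr_ge0 ltW.
Qed.

End SquaredModulus.

(** * Linear algebra on [T -> C] *)

Section Operators.
Variables (R : realType) (T : finType).
Local Notation C := (complex R).
Local Notation vec := (T -> C).

(* Operators are kernels [T -> T -> C], the encoding of [povm] and [outcome_prob]. *)
Definition op := T -> T -> C.
Implicit Types (A B P : op) (u v w : vec).

Definition mulop A B : op := fun x y => \sum_z A x z * B z y.
Definition oneop : op := fun x y => (x == y)%:R.
Definition zeroop : op := fun _ _ => 0.
Definition subop A B : op := fun x y => A x y - B x y.
Definition adjop A : op := fun x y => (A y x)^*.
Definition appop A v : vec := fun x => \sum_y A x y * v y.
Definition sqnorm v : R := \sum_x sqnormc (v x).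
Definition is_proj P := adjop P = P /\ mulop P P = P.

Lemma op_ext A B : (forall x y, A x y = B x y) -> A = B.
Proof.
by move=> eqAB; do 2!apply: functional_extensionality => ?; apply: eqAB.
Qed.

Lemma sum_delta (F : T -> C) x : \sum_z (x == z)%:R * F z = F x.
Proof.
rewrite (bigD1 x) //= eqxx mul1r big1 ?addr0 // => z /negbTE.
by rewrite eq_sym => ->; rewrite mul0r.
Qed.

Lemma mulopA A B P : mulop A (mulop B P) = mulop (mulop A B) P.
Proof.
apply: op_ext => x y; rewrite /mulop.
under eq_bigr do rewrite mulr_sumr.
under [RHS]eq_bigr do rewrite mulr_suml.
by rewrite exchange_big; apply: eq_bigr => w _; apply: eq_bigr => z _; rewrite mulrA.
Qed.

Lemma mul1op A : mulop oneop A = A.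
Proof. by apply: op_ext => x y; rewrite /mulop sum_delta. Qed.

Lemma mulop1 A : mulop A oneop = A.
Proof.
apply: op_ext => x y; rewrite /mulop -[RHS](sum_delta (A x) y).
by apply: eq_bigr => z _; rewrite mulrC eq_sym.
Qed.

Lemma mulop0 A : mulop A zeroop = zeroop.
Proof. by apply: op_ext => x y; rewrite /mulop big1 // => z _; rewrite mulr0. Qed.

Lemma mulopBr A B P : mulop A (subop B P) = subop (mulop A B) (mulop A P).
Proof.
by apply: op_ext => x y; rewrite /mulop /subop -sumrB; apply: eq_bigr => z _; rewrite mulrBr.
Qed.

Lemma mulopBl A B P : mulop (subop B P) A = subop (mulop B A) (mulop P A).
Proof.
by apply: op_ext => x y; rewrite /mulop /subop -sumrB; apply: eq_bigr => z _; rewrite mulrBl.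
Qed.

Lemma adjopK A : adjop (adjop A) = A.
Proof. by apply: op_ext => x y; rewrite /adjop conjCK. Qed.

Lemma adjopM A B : adjop (mulop A B) = mulop (adjop B) (adjop A).
Proof.
apply: op_ext => x y; rewrite /adjop /mulop rmorph_sum.
by apply: eq_bigr => z _; rewrite rmorphM mulrC.
Qed.

Lemma adjopB A B : adjop (subop A B) = subop (adjop A) (adjop B).
Proof. by apply: op_ext => x y; rewrite /adjop /subop rmorphB. Qed.

Lemma adjop1 : adjop oneop = oneop.
Proof. by apply: op_ext => x y; rewrite /adjop /oneop conjC_nat eq_sym. Qed.

Lemma is_proj0 : is_proj zeroop.
Proof.
by split; [apply: op_ext => x y; rewrite /adjop conjC0 | rewrite mulop0].
Qed.

Lemma is_projC P : is_proj P -> is_proj (subop oneop P).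
Proof.
move=> [adjP idemP]; split; first by rewrite adjopB adjop1 adjP.
rewrite mulopBr !mulopBl !mul1op mulop1 idemP.
by apply: op_ext => x y; rewrite /subop; ring.
Qed.

Lemma appopM A B v : appop (mulop A B) v = appop A (appop B v).
Proof.
apply: functional_extensionality => x; rewrite /appop /mulop.
under eq_bigr do rewrite mulr_suml.
under [RHS]eq_bigr do rewrite mulr_sumr.
by rewrite exchange_big; apply: eq_bigr => w _; apply: eq_bigr => z _; rewrite mulrA.
Qed.

Lemma appop1 v : appop oneop v = v.
Proof. by apply: functional_extensionality => x; rewrite /appop sum_delta. Qed.

Lemma appop0 v : appop zeroop v = fun _ => 0.
Proof.
by apply: functional_extensionality => x; rewrite /appop big1 // => y _; rewrite mul0r.
Qed.

Lemma appopBl A B v : appop (subop A B) v = fun x => appop A v x - appop B v x.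
Proof.
apply: functional_extensionality => x.
by rewrite /appop -sumrB; apply: eq_bigr => z _; rewrite mulrBl.
Qed.

Lemma appopBr A u w : appop A (fun y => u y - w y) = fun x => appop A u x - appop A w x.
Proof.
apply: functional_extensionality => x.
by rewrite /appop -sumrB; apply: eq_bigr => z _; rewrite mulrBr.
Qed.

Lemma inner_appop u A v : inner u (appop A v) = inner (appop (adjop A) u) v.
Proof.
rewrite /inner /appop /adjop.
under eq_bigr do rewrite mulr_sumr.
under [RHS]eq_bigr do rewrite rmorph_sum /= mulr_suml.
rewrite exchange_big; apply: eq_bigr => y _; apply: eq_bigr => x _.
by rewrite rmorphM /= conjCK mulrA [_ * (A x y)]mulrC.
Qed.

Lemma inner_sqnorm v : inner v v = (sqnorm v)%:C.
Proof. by rewrite /inner /sqnorm rmorph_sum; apply: eq_bigr => x _; rewrite sqnormcE. Qed.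

Lemma outcome_probE (O : finType) (E : O -> op) o v :
  outcome_prob E o v = inner v (appop (E o) v).
Proof.
rewrite /outcome_prob /inner /appop; apply: eq_bigr => x _; rewrite mulr_sumr.
by apply: eq_bigr => y _; rewrite mulrA.
Qed.

Lemma inner_gram A v : inner v (appop (mulop (adjop A) A) v) = (sqnorm (appop A v))%:C.
Proof. by rewrite appopM inner_appop adjopK inner_sqnorm. Qed.

Lemma sqnorm_ge0 v : 0 <= sqnorm v.
Proof. by rewrite sumr_ge0 // => x _; apply: sqnormc_ge0. Qed.

Lemma sqnormN v : sqnorm (fun x => - v x) = sqnorm v.
Proof. by apply: eq_bigr => x _; rewrite sqnormcN. Qed.

Lemma sqnorm0 : sqnorm (fun _ => 0) = 0.
Proof. by rewrite /sqnorm big1 // => x _; rewrite sqnormc_real expr0n. Qed.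

Lemma sqnormZ (r : R) v : sqnorm (fun x => r%:C * v x) = r ^+ 2 * sqnorm v.
Proof. by rewrite /sqnorm mulr_sumr; apply: eq_bigr => x _; rewrite sqnormcM sqnormc_real. Qed.

Lemma sqnormJ v : sqnorm (fun x => (v x)^*) = sqnorm v.
Proof. by apply: eq_bigr => x _; rewrite sqnormcJ. Qed.

Lemma sqnorm_eq0 v : sqnorm v = 0 -> forall x, v x = 0.
Proof.
by move=> v0 x; apply: sqnormc_eq0; apply: (psumr_eq0P (fun x _ => sqnormc_ge0 (v x)) v0).
Qed.

Definition normalize v : vec := fun x => (Num.sqrt (sqnorm v))^-1%:C * v x.

Lemma sqnorm_normalize v : sqnorm v != 0 -> sqnorm (normalize v) = 1.
Proof. by move=> v_neq0; rewrite sqnormZ exprVn sqr_sqrtr ?sqnorm_ge0 // mulVf. Qed.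

Lemma sqnormD_le (t : R) u w : 0 < t ->
  sqnorm (fun x => u x + w x) <= (1 + t) * sqnorm u + (1 + t^-1) * sqnorm w.
Proof.
move=> t_gt0; rewrite /sqnorm !mulr_sumr -big_split /=; apply: ler_sum => x _.
exact: sqnormcD_le.
Qed.

Lemma inner_proj P v : is_proj P -> inner v (appop P v) = (sqnorm (appop P v))%:C.
Proof. by move=> [adjP idemP]; rewrite -{1}idemP -{1}adjP inner_gram. Qed.

Lemma sqnorm_proj_pythagoras P v : is_proj P ->
  sqnorm v = sqnorm (appop P v) + sqnorm (fun x => v x - appop P v x).
Proof.
move=> projP; apply: real_complex_inj.
have -> : (fun x => v x - appop P v x) = appop (subop oneop P) v by rewrite appopBl appop1.
rewrite real_complexD -inner_proj // -inner_proj; last exact: is_projC.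
rewrite -inner_sqnorm /inner -big_split /=.
by apply: eq_bigr => x _; rewrite -mulrDr appopBl appop1 addrC subrK.
Qed.

Lemma sqnorm_proj_le P v : is_proj P -> sqnorm (appop P v) <= sqnorm v.
Proof. by move=> projP; rewrite (sqnorm_proj_pythagoras v projP) lerDl sqnorm_ge0. Qed.

Lemma sqnorm_projC_le P v : is_proj P -> sqnorm (fun x => v x - appop P v x) <= sqnorm v.
Proof. by move=> projP; rewrite (sqnorm_proj_pythagoras v projP) lerDr sqnorm_ge0. Qed.

End Operators.
Arguments oneop {R T}.
Arguments zeroop {R T}.

(** * Sequential projective measurements *)

Section SequentialMeasurement.
Variables (R : realType) (T : finType) (P : nat -> op R T).
Hypothesis projP : forall j, is_proj (P j).

Fixpoint seq_reject k : op R T :=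
  if k is j.+1 then mulop (subop oneop (P j)) (seq_reject j) else oneop.

Definition seq_accept k := mulop (P k) (seq_reject k).

Lemma gram_proj_split (Q B : op R T) x y : is_proj Q ->
  mulop (adjop (mulop Q B)) (mulop Q B) x y
  + mulop (adjop (mulop (subop oneop Q) B)) (mulop (subop oneop Q) B) x y
  = mulop (adjop B) B x y.
Proof.
have gram_proj Q' : is_proj Q' ->
    mulop (adjop (mulop Q' B)) (mulop Q' B) = mulop (adjop B) (mulop Q' B).
  by move=> [adjQ idemQ]; rewrite adjopM adjQ -mulopA [mulop Q' (mulop Q' B)]mulopA idemQ.
move=> projQ; rewrite gram_proj // (gram_proj _ (is_projC projQ)).
by rewrite mulopBl mul1op mulopBr /subop addrC subrK.
Qed.

Lemma seq_measurement_complete k x y :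
  \sum_(j < k) mulop (adjop (seq_accept j)) (seq_accept j) x y
  + mulop (adjop (seq_reject k)) (seq_reject k) x y = oneop x y.
Proof.
elim: k => [|k IHk]; first by rewrite big_ord0 add0r /= adjop1 mul1op.
by rewrite big_ord_recr /= -addrA gram_proj_split.
Qed.

Variable psi : T -> complex R.

(* With [B_j := seq_reject j], [B_(j+1) psi - psi = (1 - P_j) (B_j psi - psi) - P_j psi]: the
   error grows by at most [sqrt delta] in norm per step (Young's inequality with [t = 1/(j+1)]). *)
Lemma seq_reject_drift (delta : R) j : 0 <= delta ->
  (forall i, (i < j)%N -> sqnorm (appop (P i) psi) <= delta) ->
  sqnorm (fun x => appop (seq_reject j) psi x - psi x) <= j.+1%:R ^+ 2 * delta.
Proof.
move=> delta_ge0; elim: j => [_|j IHj small].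
  have -> : (fun x => appop oneop psi x - psi x) = fun _ => 0.
    by apply: functional_extensionality => x; rewrite appop1 subrr.
  by rewrite sqnorm0 mulr_ge0 ?sqr_ge0.
set d := fun x => appop (seq_reject j) psi x - psi x.
have -> : (fun x => appop (seq_reject j.+1) psi x - psi x)
    = fun x => (d x - appop (P j) d x) + - appop (P j) psi x.
  rewrite /= appopM appopBl appop1 /d appopBr.
  by apply: functional_extensionality => x; ring.
set J : R := j.+1%:R.
have J_gt0 : 0 < J by rewrite ltr0n.
have Jinv_gt0 : 0 < J^-1 by rewrite invr_gt0.
apply: le_trans (sqnormD_le _ _ Jinv_gt0) _.
rewrite sqnormN invrK.
have {}IHj : sqnorm d <= J ^+ 2 * delta by apply: IHj => i /ltnW; apply: small.
have d_proj := le_trans (sqnorm_projC_le d (projP j)) IHj.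
have Pj_psi := small j (ltnSn j).
have -> : j.+2%:R = J + 1 :> R by rewrite -natr1.
have -> : (J + 1) ^+ 2 * delta = (1 + J^-1) * (J ^+ 2 * delta) + (1 + J) * delta.
  by field; rewrite nat1r pnatr_eq0.
by apply: lerD; apply: ler_wpM2l => //; rewrite addr_ge0 ?invr_ge0 ?ltW.
Qed.

Lemma seq_accept_lower_bound (delta t : R) k : 0 <= delta -> 0 < t ->
  sqnorm psi = 1 ->
  (forall j, (j < k)%N -> sqnorm (appop (P j) psi) <= delta) ->
  appop (P k) psi = psi ->
  1 <= (1 + t) * sqnorm (appop (seq_accept k) psi) + (1 + t^-1) * (k.+1%:R ^+ 2 * delta).
Proof.
move=> delta_ge0 t_gt0 psi1 small fixed.
have drift := seq_reject_drift delta_ge0 small.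
set d := fun x => appop (seq_reject k) psi x - psi x in drift.
have psi_split : psi = fun x => appop (seq_accept k) psi x + - appop (P k) d x.
  apply: functional_extensionality => x.
  by rewrite /seq_accept appopM /d appopBr fixed; ring.
rewrite -{1}psi1 {1}psi_split.
apply: le_trans (sqnormD_le _ _ t_gt0) _.
rewrite sqnormN lerD2l; apply: ler_wpM2l; first by rewrite addr_ge0 // invr_ge0 ltW.
exact: le_trans (sqnorm_proj_le d (projP k)) drift.
Qed.

End SequentialMeasurement.

Lemma is_state_sqnorm (R : realType) (Q : finType) (a : qvec R Q) :
  is_state a <-> sqnorm a = 1.
Proof.
rewrite /is_state inner_sqnorm; split => [a1|->//].
by apply: real_complex_inj; rewrite a1.
Qed.

Lemma far_overlap_le (R : realType) (Q : finType) (eps r : R) (a chi : qvec R Q) :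
  far_from_product eps a -> multipartite_product chi -> inner a chi = r%:C ->
  r ^+ 2 <= 1 - eps ^+ 2.
Proof.
move=> far chi_prod overlap; have := far chi chi_prod.
rewrite overlap sqr_normc conjc_real -rmorphM -rmorphB /= lecR.
by rewrite expr2.
Qed.

(** * Purity of reduced states *)

Definition splice (Q : finType) (S : {set Q}) (u v : {ffun Q -> bool}) : {ffun Q -> bool} :=
  [ffun x => if x \in S then u x else v x].

Lemma splice_set0 (Q : finType) (u v : {ffun Q -> bool}) : splice set0 u v = v.
Proof. by apply/ffunP => x; rewrite ffunE in_set0. Qed.

Lemma splice_setT (Q : finType) (u v : {ffun Q -> bool}) : splice setT u v = u.
Proof. by apply/ffunP => x; rewrite ffunE in_setT. Qed.

(* [purity S a] is <a (x) a| SWAP_S |a (x) a> = Tr(rho_S^2), where SWAP_S exchanges the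
   S-parts of the two copies and rho_S is the reduced state of [a] on S. *)
Definition purity (R : realType) (Q : finType) (S : {set Q}) (a : qvec R Q) : complex R :=
  \sum_u1 \sum_u2 (a u1 * a u2)^* * (a (splice S u2 u1) * a (splice S u1 u2)).

Section Bipartition.
Variables (R : realType) (Q : finType) (D : {set Q}).
Local Notation C := (complex R).
Local Notation XQ := {ffun Q -> bool}.
Local Notation XD := {ffun sub D -> bool}.
Local Notation XD' := {ffun sub (~: D) -> bool}.

Definition join (i : XD) (k : XD') : XQ :=
  [ffun x => if insub x is Some y then i y
             else if insub x is Some z then k z else false].

Lemma restr_join i k : restr D (join i k) = i.
Proof.
apply/ffunP => y; rewrite !ffunE.
by case: insubP => [y' _ /val_inj -> //|]; rewrite (valP y).
Qed.

Lemma restrC_join i k : restr (~: D) (join i k) = k.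
Proof.
apply/ffunP => y; rewrite !ffunE.
case: insubP => [y' y'D _|_]; first by move: (valP y); rewrite in_setC y'D.
by case: insubP => [y' _ /val_inj -> //|]; rewrite (valP y).
Qed.

Lemma join_restr u : join (restr D u) (restr (~: D) u) = u.
Proof.
apply/ffunP => x; rewrite !ffunE.
case: insubP => [y _ <-|xD]; first by rewrite ffunE.
by case: insubP => [z _ <-|]; [rewrite ffunE | rewrite in_setC xD].
Qed.

Lemma sum_join (V : nmodType) (F : XQ -> V) :
  \sum_(u : XQ) F u = \sum_(i : XD) \sum_(k : XD') F (join i k).
Proof.
rewrite pair_big (reindex (fun p : XD * XD' => join p.1 p.2)) //=.
exists (fun u => (restr D u, restr (~: D) u)) => [[i k] _|u _] /=.
  by rewrite restr_join restrC_join.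
by rewrite join_restr.
Qed.

Lemma splice_join i1 k1 i2 k2 : splice D (join i1 k1) (join i2 k2) = join i1 k2.
Proof.
apply/ffunP => x; rewrite !ffunE.
by case: insubP => [y _ <-|xD]; [rewrite (valP y) | rewrite (negbTE xD)].
Qed.

Lemma tensor_join (a : qvec R (sub D)) (b : qvec R (sub (~: D))) i k :
  tensor a b (join i k) = a i * b k.
Proof. by rewrite /tensor restr_join restrC_join. Qed.

Lemma sqnorm_tensor (al : qvec R (sub D)) (be : qvec R (sub (~: D))) :
  sqnorm (tensor al be) = sqnorm al * sqnorm be.
Proof.
rewrite /sqnorm sum_join big_distrlr; apply: eq_bigr => i _; apply: eq_bigr => k _.
by rewrite tensor_join sqnormcM.
Qed.

Lemma tensor_multipartite_product (al : qvec R (sub D)) (be : qvec R (sub (~: D))) :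
  D != set0 -> D != setT -> sqnorm al = 1 -> sqnorm be = 1 ->
  multipartite_product (tensor al be).
Proof.
move=> D0 DT al1 be1; split; first by apply/is_state_sqnorm; rewrite sqnorm_tensor al1 be1 mulr1.
by exists D; split => //; exists al, be.
Qed.

Variable a : qvec R Q.

Definition gram (i1 i2 : XD) : C := \sum_(k : XD') (a (join i1 k))^* * a (join i2 k).

Lemma purity_gram : purity D a = (\sum_i1 \sum_i2 sqnormc (gram i1 i2))%:C.
Proof.
rewrite /purity sum_join.
rewrite rmorph_sum; apply: eq_bigr => i1 _; rewrite rmorph_sum.
under eq_bigr => k _ do rewrite sum_join.
rewrite exchange_big /=; apply: eq_bigr => i2 _.
rewrite -sqnormcE mulrC /gram rmorph_sum /= mulr_suml; apply: eq_bigr => k1 _.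
rewrite mulr_sumr; apply: eq_bigr => k2 _.
by rewrite !splice_join !rmorphM /= conjCK; ring.
Qed.

(* [w / |w|] (x) [v^* / |v|] is a product state whose overlap with [a] is [|w| / |v|]. *)
Lemma far_coeff_contraction (eps : R) : eps ^+ 2 <= 1 -> D != set0 -> D != setT ->
  far_from_product eps a -> forall v : XD' -> C,
  sqnorm (fun i => \sum_k a (join i k) * v k) <= (1 - eps ^+ 2) * sqnorm v.
Proof.
move=> eps_le1 D0 DT far v; set w := fun i => \sum_k a (join i k) * v k.
have [->|w_neq0] := eqVneq (sqnorm w) 0; first by rewrite mulr_ge0 ?sqnorm_ge0 ?subr_ge0.
have v_neq0 : sqnorm v != 0.
  apply: contra w_neq0 => /eqP/sqnorm_eq0 v0; apply/eqP; rewrite -(@sqnorm0 _ XD); congr sqnorm.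
  by apply: functional_extensionality => i; rewrite /w big1 // => k _; rewrite v0 mulr0.
set sw := Num.sqrt (sqnorm w); set sv := Num.sqrt (sqnorm v).
have sw_gt0 : 0 < sw by rewrite sqrtr_gt0 lt0r w_neq0 sqnorm_ge0.
have sv_gt0 : 0 < sv by rewrite sqrtr_gt0 lt0r v_neq0 sqnorm_ge0.
pose chi := tensor (normalize w) (normalize (fun k => (v k)^*)).
have chi_prod : multipartite_product chi.
  by apply: tensor_multipartite_product; rewrite ?sqnorm_normalize ?sqnormJ.
have overlap : inner a chi = (sw / sv)%:C.
  have -> : sw / sv = sw^-1 * sv^-1 * sqnorm w.
    by rewrite -[sqnorm w]sqr_sqrtr ?sqnorm_ge0 // -/sw; field; rewrite !gt_eqF.
  rewrite /inner sum_join !rmorphM rmorph_sum /= mulr_sumr; apply: eq_bigr => i _.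
  rewrite -sqnormcE {1}/w rmorph_sum /= mulr_suml mulr_sumr; apply: eq_bigr => k _.
  by rewrite /chi tensor_join /normalize sqnormJ -/sw -/sv; ring.
have := far_overlap_le far chi_prod overlap.
by rewrite expr_div_n !sqr_sqrtr ?sqnorm_ge0 // ler_pdivrMr // lt0r v_neq0 sqnorm_ge0.
Qed.

Lemma gram_far_le (eps : R) : eps ^+ 2 <= 1 -> D != set0 -> D != setT ->
  far_from_product eps a -> is_state a ->
  \sum_i1 \sum_i2 sqnormc (gram i1 i2) <= 1 - eps ^+ 2.
Proof.
move=> eps_le1 D0 DT far /is_state_sqnorm a1.
rewrite -[X in _ <= X]mulr1 -{2}a1 /sqnorm sum_join mulr_sumr; apply: ler_sum => i1 _.
have -> : \sum_i2 sqnormc (gram i1 i2) = sqnorm (fun i => \sum_k a (join i k) * (a (join i1 k))^*).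
  by apply: eq_bigr => i2 _; rewrite /gram; congr sqnormc; apply: eq_bigr => k _; rewrite mulrC.
apply: le_trans (far_coeff_contraction eps_le1 D0 DT far (fun k => (a (join i1 k))^*)) _.
by rewrite sqnormJ.
Qed.

End Bipartition.

Section Purity.
Variables (R : realType) (Q : finType) (a : qvec R Q).
Hypothesis a_state : is_state a.

Lemma purity_trivial (S : {set Q}) : (S == set0) || (S == setT) -> purity S a = 1.
Proof.
move=> S_triv; transitivity ((sqnorm a * sqnorm a)%:C); last first.
  by rewrite (is_state_sqnorm a).1 // mulr1.
rewrite /sqnorm big_distrlr rmorph_sum; apply: eq_bigr => u1 _.
rewrite rmorph_sum; apply: eq_bigr => u2 _ /=; rewrite -sqnormcM -sqnormcE.
by case/orP: S_triv => /eqP ->; rewrite ?splice_set0 ?splice_setT // [a u2 * _]mulrC.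
Qed.

Lemma purity_bound (eps : R) (S : {set Q}) : eps ^+ 2 <= 1 -> far_from_product eps a ->
  exists r : R, [/\ purity S a = r%:C, 0 <= r, r <= 1 &
                    (S != set0) && (S != setT) -> r <= 1 - eps ^+ 2].
Proof.
move=> eps_le1 far; have eps_ge0 : 0 <= eps ^+ 2 by apply: sqr_ge0.
have [S_triv|/norP[S0 ST]] := boolP ((S == set0) || (S == setT)).
  exists 1; split => //; first exact: purity_trivial.
  by case/andP=> S0 ST; move: S_triv; rewrite (negbTE S0) (negbTE ST).
have gram_le := gram_far_le eps_le1 S0 ST far a_state.
exists (\sum_i1 \sum_i2 sqnormc (@gram R Q S a i1 i2)); split.
- exact: purity_gram.
- by rewrite !sumr_ge0 // => i1 _; rewrite sumr_ge0 // => i2 _; apply: sqnormc_ge0.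
- by apply: le_trans gram_le _; rewrite lerBlDr lerDl.
- by [].
Qed.

End Purity.

Definition restr_set (Q : finType) (D S : {set Q}) : {set sub D} := [set y | val y \in S].

Lemma restr_splice (Q : finType) (D S : {set Q}) (u v : {ffun Q -> bool}) :
  restr D (splice S u v) = splice (restr_set D S) (restr D u) (restr D v).
Proof. by apply/ffunP => y; rewrite !ffunE inE. Qed.

Lemma restr_set_trivial (Q : finType) (D S : {set Q}) :
  (restr_set D S == set0) || (restr_set D S == setT) -> exists c, {in D, forall x, (x \in S) = c}.
Proof.
case/orP => /eqP DS; [exists false | exists true] => x xD.
  by have := in_set0 (Sub x xD : sub D); rewrite -DS inE SubK.
by have := in_setT (Sub x xD : sub D); rewrite -DS inE SubK => ->.
Qed.

Section TensorState.
Variables (R : realType) (n : nat) (Cut : {set 'I_n}).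
Variables (a : qvec R (sub Cut)) (b : qvec R (sub (~: Cut))).
Local Notation psi := (tensor a b).

Lemma purity_tensor S :
  purity S psi = purity (restr_set Cut S) a * purity (restr_set (~: Cut) S) b.
Proof.
rewrite /purity (sum_join Cut) big_distrl; apply: eq_bigr => i1 _ /=.
under eq_bigr => k1 _ do rewrite (sum_join Cut).
rewrite exchange_big big_distrl; apply: eq_bigr => i2 _ /=.
rewrite mulr_sumr; apply: eq_bigr => k1 _; rewrite mulr_sumr; apply: eq_bigr => k2 _.
by rewrite /tensor !restr_splice !restr_join !restrC_join !rmorphM /=; ring.
Qed.

Lemma tensor_swap_invariant S u1 u2 : (S == Cut) || (S == ~: Cut) ->
  psi (splice S u2 u1) * psi (splice S u1 u2) = psi u1 * psi u2.
Proof.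
have restr_set_id D : restr_set D D = setT by apply/setP => y; rewrite !inE (valP y).
have restr_setC D : restr_set (~: D) D = set0.
  by apply/setP => y; rewrite !inE; have := valP y; rewrite inE => /negbTE.
have restrC_setC D : restr_set D (~: D) = set0.
  by apply/setP => y; rewrite !inE (valP y).
case/orP => /eqP ->; rewrite /tensor !restr_splice.
  by rewrite restr_set_id restr_setC !splice_setT !splice_set0; ring.
by rewrite restr_set_id restrC_setC !splice_setT !splice_set0; ring.
Qed.

Lemma proper_restr_set S : S != set0 -> S != setT -> S != Cut -> S != ~: Cut ->
  ((restr_set Cut S != set0) && (restr_set Cut S != setT))
  || ((restr_set (~: Cut) S != set0) && (restr_set (~: Cut) S != setT)).
Proof.
move=> S0 ST SC SC'; apply/negPn/negP => /norP[/nandP triv1 /nandP triv2].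
have [c1 S_Cut] : exists c, {in Cut, forall x, (x \in S) = c}.
  by apply: restr_set_trivial; case: triv1 => /negPn ->; rewrite ?orbT.
have [c2 S_Cut'] : exists c, {in ~: Cut, forall x, (x \in S) = c}.
  by apply: restr_set_trivial; case: triv2 => /negPn ->; rewrite ?orbT.
have {S_Cut S_Cut'} S_def x : (x \in S) = if x \in Cut then c1 else c2.
  by case: ifP => xC; [apply: S_Cut | apply: S_Cut'; rewrite inE xC].
move: S0 ST SC SC'; case: c1 S_def; case: c2 => S_def.
- by rewrite (_ : S = setT) ?eqxx //; apply/setP => x; rewrite S_def inE; case: ifP.
- by rewrite (_ : S = Cut) ?eqxx //; apply/setP => x; rewrite S_def; case: ifP.
- by rewrite (_ : S = ~: Cut) ?eqxx //; apply/setP => x; rewrite S_def inE; case: ifP.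
- by rewrite (_ : S = set0) ?eqxx //; apply/setP => x; rewrite S_def inE; case: ifP.
Qed.

End TensorState.

(** * The swap test on pairs of copies *)

Section SwapTest.
Variables (R : realType) (n q : nat).
Local Notation C := (complex R).
Local Notation X := {ffun 'I_n -> bool}.
Local Notation copies := (copies_idx n (q + q)).

(* The [2q] copies are grouped into the [q] pairs [(j, q + j)]. *)
Definition pair_copy (Y : copies) (j : 'I_q) : X * X := (Y (lshift q j), Y (rshift q j)).

Definition copies_pairs (Y : copies) : {ffun 'I_q -> X * X} := [ffun j => pair_copy Y j].

Definition pairs_copies (F : {ffun 'I_q -> X * X}) : copies :=
  [ffun k => match split k with inl j => (F j).1 | inr j => (F j).2 end].

Lemma copies_pairsK : cancel copies_pairs pairs_copies.
Proof.
move=> Y; apply/ffunP => k; rewrite !ffunE.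
by case: splitP => j kj; rewrite ffunE /pair_copy /=; congr (Y _); apply: val_inj.
Qed.

Lemma pairs_copiesK : cancel pairs_copies copies_pairs.
Proof.
move=> F; apply/ffunP => j; rewrite !ffunE /pair_copy !ffunE.
rewrite (unsplitK (inl _ j) : split (lshift q j) = inl j).
rewrite (unsplitK (inr _ j) : split (rshift q j) = inr j).
by case: (F j).
Qed.

Lemma sum_prod_pairs (g : 'I_q -> X * X -> C) :
  \sum_(Y : copies) \prod_j g j (pair_copy Y j) = \prod_j \sum_(p : X * X) g j p.
Proof.
rewrite bigA_distr_bigA /= (reindex copies_pairs) /=; last first.
  by exists pairs_copies => ? _; [apply: copies_pairsK | apply: pairs_copiesK].
by apply: eq_bigr => Y _; apply: eq_bigr => j _; rewrite ffunE.
Qed.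

Variable psi : qvec R 'I_n.

Lemma tensor_pow_pairs Y :
  tensor_pow psi Y = \prod_j (psi (pair_copy Y j).1 * psi (pair_copy Y j).2).
Proof. by rewrite /tensor_pow big_split_ord /= -big_split. Qed.

Lemma sum_pair_state_sqnorm : sqnorm psi = 1 ->
  \sum_(p : X * X) (psi p.1 * psi p.2)^* * (psi p.1 * psi p.2) = 1.
Proof.
move=> psi1; rewrite -(pair_bigA _ (fun u1 u2 => (psi u1 * psi u2)^* * (psi u1 * psi u2))) /=.
transitivity (inner psi psi * inner psi psi); last by rewrite inner_sqnorm psi1 mulr1.
rewrite /inner big_distrlr; apply: eq_bigr => u1 _; apply: eq_bigr => u2 _.
by rewrite rmorphM /=; ring.
Qed.

Lemma sqnorm_tensor_pow : sqnorm psi = 1 -> sqnorm (tensor_pow (m := q + q) psi) = 1.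
Proof.
move=> psi1; apply: real_complex_inj; rewrite -inner_sqnorm /inner.
pose g (j : 'I_q) (p : X * X) := (psi p.1 * psi p.2)^* * (psi p.1 * psi p.2).
transitivity (\sum_(Y : copies) \prod_j g j (pair_copy Y j)).
  by apply: eq_bigr => Y _; rewrite tensor_pow_pairs rmorph_prod /= -big_split.
by rewrite sum_prod_pairs big1 // => j _; apply: sum_pair_state_sqnorm.
Qed.

Variable S : {set 'I_n}.

Definition swap_parts (p : X * X) : X * X := (splice S p.2 p.1, splice S p.1 p.2).

Lemma swap_partsK : involutive swap_parts.
Proof.
by move=> [u v]; congr pair; apply/ffunP => x; rewrite !ffunE; case: (x \in S).
Qed.

(* Matrix entries of the projection (1 + SWAP_S) / 2 on a pair of copies. *)
Definition sym_kernel (p p' : X * X) : C := ((p == p')%:R + (swap_parts p == p')%:R) / 2.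

Lemma sym_kernelC p p' : sym_kernel p p' = sym_kernel p' p.
Proof.
have swap_eq : (swap_parts p == p') = (swap_parts p' == p).
  by rewrite -{1}(swap_partsK p') (inj_eq (can_inj swap_partsK)) eq_sym.
by rewrite /sym_kernel [p == p']eq_sym swap_eq.
Qed.

Lemma sym_kernel_swapl p p' : sym_kernel (swap_parts p) p' = sym_kernel p p'.
Proof. by rewrite /sym_kernel swap_partsK addrC. Qed.

Lemma sum_sym_kernel (F : X * X -> C) p :
  \sum_w sym_kernel p w * F w = (F p + F (swap_parts p)) / 2.
Proof.
rewrite /sym_kernel; under eq_bigr do rewrite mulrAC mulrDl.
by rewrite -mulr_suml big_split /= !sum_delta.
Qed.

Lemma sym_kernel_idem p p' : \sum_w sym_kernel p w * sym_kernel w p' = sym_kernel p p'.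
Proof.
rewrite (sum_sym_kernel (sym_kernel^~ p')) sym_kernel_swapl.
by field.
Qed.

Definition swap_test : op R copies :=
  fun Y Z => \prod_j sym_kernel (pair_copy Y j) (pair_copy Z j).

Lemma swap_test_proj : is_proj swap_test.
Proof.
split; apply: op_ext => Y Z.
  rewrite /adjop /swap_test rmorph_prod /=; apply: eq_bigr => j _.
  by rewrite sym_kernelC /sym_kernel rmorphM rmorphD /= !conjC_nat fmorphV /= conjC_nat.
pose g j w := sym_kernel (pair_copy Y j) w * sym_kernel w (pair_copy Z j).
transitivity (\sum_(W : copies) \prod_j g j (pair_copy W j)).
  by apply: eq_bigr => W _; rewrite big_split.
by rewrite sum_prod_pairs; apply: eq_bigr => j _; apply: sym_kernel_idem.
Qed.

Lemma swap_test_apply Y : appop swap_test (tensor_pow psi) Y =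
  \prod_j ((psi (pair_copy Y j).1 * psi (pair_copy Y j).2
            + psi (swap_parts (pair_copy Y j)).1 * psi (swap_parts (pair_copy Y j)).2) / 2).
Proof.
rewrite /appop /swap_test.
pose g j w := sym_kernel (pair_copy Y j) w * (psi w.1 * psi w.2).
transitivity (\sum_(W : copies) \prod_j g j (pair_copy W j)).
  by apply: eq_bigr => W _; rewrite tensor_pow_pairs -big_split.
by rewrite sum_prod_pairs; apply: eq_bigr => j _; rewrite sum_sym_kernel.
Qed.

Lemma swap_test_fixed : (forall u1 u2, psi (splice S u2 u1) * psi (splice S u1 u2) = psi u1 * psi u2) ->
  appop swap_test (tensor_pow psi) = tensor_pow psi.
Proof.
move=> invariant; apply: functional_extensionality => Y.
rewrite swap_test_apply tensor_pow_pairs; apply: eq_bigr => j _.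
by rewrite /swap_parts /= invariant; field.
Qed.

Lemma swap_test_accept : sqnorm psi = 1 ->
  (sqnorm (appop swap_test (tensor_pow psi)))%:C = ((1 + purity S psi) / 2) ^+ q.
Proof.
move=> psi1; rewrite -(inner_proj _ swap_test_proj) /inner.
pose g (j : 'I_q) (p : X * X) := (psi p.1 * psi p.2)^* *
  ((psi p.1 * psi p.2 + psi (swap_parts p).1 * psi (swap_parts p).2) / 2).
transitivity (\sum_(Y : copies) \prod_j g j (pair_copy Y j)).
  by apply: eq_bigr => Y _; rewrite swap_test_apply tensor_pow_pairs rmorph_prod /= -big_split.
rewrite sum_prod_pairs /g prodr_const card_ord; congr (_ ^+ _).
rewrite -(sum_pair_state_sqnorm psi1) /purity pair_big -big_split mulr_suml /=.
by apply: eq_bigr => p _; rewrite /swap_parts /=; ring.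
Qed.

End SwapTest.

(** * Identifying the cut *)

Lemma enum_rank_nth (T : finType) (x0 : T) j (j_lt : (j < #|T|)%N) :
  enum_rank (nth x0 (enum T) j) = j :> nat.
Proof. by rewrite -(enum_val_nth x0 (Ordinal j_lt)) enum_valK. Qed.

Lemma enum_rank_min2 (T : finType) (x y : T) :
  exists2 z, (z == x) || (z == y) &
    forall x0 j, (j < enum_rank z)%N -> nth x0 (enum T) j != x /\ nth x0 (enum T) j != y.
Proof.
wlog le_xy : x y / (enum_rank x <= enum_rank y)%N.
  move=> wlog_xy; case: (leqP (enum_rank x) (enum_rank y)) => [/wlog_xy //|/ltnW/wlog_xy].
  by case=> z zxy earlier; exists z; [rewrite orbC | move=> x0 j /(earlier x0) []].
exists x; rewrite ?eqxx // => x0 j j_lt.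
have j_card : (j < #|T|)%N by apply: ltn_trans j_lt _.
by split; apply/eqP => nth_j; move: j_lt; rewrite -[j](enum_rank_nth x0 j_card) nth_j ?ltnn // ltnNge le_xy.
Qed.

Section CutMeasurement.
Variables (R : realType) (n q : nat).
Local Notation copies := (copies_idx n (q + q)).

Definition cut_test (S : {set 'I_n}) : op R copies :=
  if (S != set0) && (S != setT) then @swap_test R n q S else zeroop.

Definition cut_tests (j : nat) : op R copies := cut_test (nth set0 (enum {set 'I_n}) j).

Lemma cut_tests_proj j : is_proj (cut_tests j).
Proof. by rewrite /cut_tests /cut_test; case: ifP => _; [apply: swap_test_proj | apply: is_proj0]. Qed.

Definition cut_prob (o : {set 'I_n}) (v : copies -> complex R) : R :=
  sqnorm (appop (seq_accept cut_tests (enum_rank o)) v)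
  + (o == set0)%:R * sqnorm (appop (seq_reject cut_tests #|{set 'I_n}|) v).

(* The answer is the first cut whose test accepts; when every test rejects, the answer is
   [set0], which is never a valid cut. *)
Definition cut_povm (o : {set 'I_n}) : op R copies := fun x y =>
  mulop (adjop (seq_accept cut_tests (enum_rank o))) (seq_accept cut_tests (enum_rank o)) x y
  + (o == set0)%:R *
    mulop (adjop (seq_reject cut_tests #|{set 'I_n}|)) (seq_reject cut_tests #|{set 'I_n}|) x y.

Lemma cut_povm_prob o v : outcome_prob cut_povm o v = (cut_prob o v)%:C.
Proof.
rewrite outcome_probE /cut_prob rmorphD rmorphM /= rmorph_nat -!inner_gram /inner.
rewrite mulr_sumr -big_split; apply: eq_bigr => x _ /=.
rewrite /appop !mulr_sumr -!big_split; apply: eq_bigr => y _ /=.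
by rewrite /cut_povm; ring.
Qed.

Lemma cut_prob_ge0 o v : 0 <= cut_prob o v.
Proof. by rewrite addr_ge0 ?mulr_ge0 ?sqnorm_ge0 ?ler0n. Qed.

Lemma cut_povm_is_povm : povm cut_povm.
Proof.
split=> [o v|x y]; first by rewrite -/(outcome_prob _ o v) cut_povm_prob ler0c cut_prob_ge0.
rewrite big_split /=; under [X in _ + X]eq_bigr do rewrite eq_sym; rewrite sum_delta.
rewrite (reindex (@enum_val _ (mem predT))) /=; last first.
  by exists enum_rank => [i _|o _]; [rewrite enum_valK | rewrite enum_rankK].
under eq_bigr do rewrite enum_valK.
exact: (seq_measurement_complete cut_tests_proj).
Qed.

End CutMeasurement.
Arguments cut_test {R n} q S _ _.
Arguments cut_tests {R n} q j _ _.
Arguments cut_povm {R n} q o _ _.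

Lemma card_set_ord n : #|{set 'I_n}| = (2 ^ n)%N.
Proof. by rewrite -cardsT -powersetT card_powerset cardsT card_ord. Qed.

Section CutIdentification.
Variables (R : realType) (n q : nat) (Cut : {set 'I_n}).
Variables (a : qvec R (sub Cut)) (b : qvec R (sub (~: Cut))) (eps : R).
Hypotheses (eps_gt0 : 0 < eps) (eps_le1 : eps <= 1) (Cut0 : Cut != set0) (CutT : Cut != setT).
Hypotheses (a_state : is_state a) (b_state : is_state b).
Hypotheses (a_far : far_from_product eps a) (b_far : far_from_product eps b).
Local Notation psi := (tensor a b).
Local Notation Psi := (tensor_pow (m := q + q) psi).
Let delta : R := (1 - eps ^+ 2 / 2) ^+ q.

Let eps2_le1 : eps ^+ 2 <= 1.
Proof. by rewrite exprn_ile1 // ltW. Qed.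

Let delta_ge0 : 0 <= delta.
Proof. by rewrite exprn_ge0 // subr_ge0 ler_pdivrMr // mul1r (le_trans eps2_le1) ?ler1n. Qed.

Let psi_sqnorm : sqnorm psi = 1.
Proof. by rewrite sqnorm_tensor (is_state_sqnorm a).1 // (is_state_sqnorm b).1 // mulr1. Qed.

Let Psi_sqnorm : sqnorm Psi = 1.
Proof. exact: sqnorm_tensor_pow. Qed.

Lemma wrong_cut_accept_le S : S != set0 -> S != setT -> S != Cut -> S != ~: Cut ->
  sqnorm (appop (@swap_test R n q S) Psi) <= delta.
Proof.
move=> S0 ST SC SC'.
have [r1 [pur_a r1_ge0 r1_le1 r1_far]] := purity_bound a_state (restr_set Cut S) eps2_le1 a_far.
have [r2 [pur_b r2_ge0 r2_le1 r2_far]] := purity_bound b_state (restr_set (~: Cut) S) eps2_le1 b_far.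
have r12_le : r1 * r2 <= 1 - eps ^+ 2.
  case/orP: (proper_restr_set S0 ST SC SC') => proper.
    by apply: le_trans (r1_far proper); rewrite ler_piMr.
  by apply: le_trans (r2_far proper); rewrite ler_piMl.
have := swap_test_accept q S psi_sqnorm.
rewrite purity_tensor pur_a pur_b -real_complexM.
have -> : (1 + (r1 * r2)%:C) / 2 = ((1 + r1 * r2) / 2)%:C :> complex R.
  by rewrite [RHS]rmorphM rmorphD /= rmorph1 fmorphV /= rmorph_nat.
rewrite -real_complexX => /real_complex_inj ->.
have r12_ge0 := mulr_ge0 r1_ge0 r2_ge0.
by rewrite /delta lerXn2r ?nnegrE //; lra.
Qed.

Lemma true_cut_accepts S : (S == Cut) || (S == ~: Cut) -> appop (cut_test q S) Psi = Psi.
Proof.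
move=> S_cut; have [S0 ST] : S != set0 /\ S != setT.
  case/orP: S_cut => /eqP ->; first by split.
  by rewrite !(can2_eq setCK setCK) setC0 setCT; split.
rewrite /cut_test S0 ST; apply: swap_test_fixed => u1 u2; exact: tensor_swap_invariant.
Qed.

Lemma cut_povm_success : 200 * ((2 ^ n)%:R ^+ 2 * delta) <= 1 / 1000 ->
  (99%:R / 100%:R : complex R) <= outcome_prob (cut_povm q) Cut Psi + outcome_prob (cut_povm q) (~: Cut) Psi.
Proof.
move=> delta_small.
have [S1 first_cut earlier] := enum_rank_min2 Cut (~: Cut).
set k0 := (enum_rank S1 : nat).
have k0_lt : (k0 < 2 ^ n)%N by rewrite -card_set_ord ltn_ord.
have early_reject j : (j < k0)%N -> sqnorm (appop (cut_tests q j) Psi) <= delta.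
  move=> j_lt; have [SC SC'] := earlier set0 j j_lt.
  rewrite /cut_tests /cut_test; case: ifP => [/andP[S0 ST]|_]; last by rewrite appop0 sqnorm0.
  exact: wrong_cut_accept_le.
have first_accepts : appop (cut_tests q k0) Psi = Psi.
  by rewrite /cut_tests /k0 nth_enum_rank; apply: true_cut_accepts.
(* With [t = 1/199] the error terms cost at most [1/200 + 1/1000]. *)
have t_gt0 : 0 < 199^-1 :> R by rewrite invr_gt0.
have := seq_accept_lower_bound (cut_tests_proj R n q) delta_ge0 t_gt0 Psi_sqnorm early_reject first_accepts.
rewrite invrK => lower.
have k0_bound : k0.+1%:R ^+ 2 * delta <= (2 ^ n)%:R ^+ 2 * delta.
  by rewrite ler_wpM2r // lerXn2r ?nnegrE ?ler0n // ler_nat.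
have accept_le : sqnorm (appop (seq_accept (cut_tests q) k0) Psi)
    <= cut_prob Cut Psi + cut_prob (~: Cut) Psi.
  have accept_first : sqnorm (appop (seq_accept (cut_tests q) k0) Psi) <= cut_prob S1 Psi.
    by rewrite /cut_prob lerDl mulr_ge0 ?sqnorm_ge0 ?ler0n.
  case/orP: first_cut => /eqP first_eq; rewrite first_eq in accept_first; apply: le_trans accept_first _.
    by rewrite lerDl cut_prob_ge0.
  by rewrite lerDr cut_prob_ge0.
rewrite !cut_povm_prob -real_complexD.
have -> : (99%:R / 100%:R : complex R) = (99%:R / 100%:R : R)%:C.
  by rewrite [RHS]rmorphM /= fmorphV /= !rmorph_nat.
rewrite lecR; lra.
Qed.

End CutIdentification.

(** * Number of copies *)

Section Rounds.
Variable R : realType.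
Implicit Types (x eps : R) (k n : nat).

Lemma bernoulli_one_sub x k : 0 <= x <= 1 -> (1 - x) ^+ k * (1 + k%:R * x) <= 1.
Proof.
case/andP=> x_ge0 x_le1; elim: k => [|k IHk]; first by rewrite expr0 mul0r addr0 mulr1.
apply: le_trans IHk; rewrite exprSr -mulrA ler_wpM2l ?exprn_ge0 ?subr_ge0 //.
have kxx_ge0 : 0 <= k.+1%:R * (x * x) :> R by rewrite mulr_ge0 ?mulr_ge0.
by rewrite -natr1 in kxx_ge0 *; nra.
Qed.

Lemma one_sub_expr_le x k : 0 <= x <= 1 -> 7 <= k%:R * x -> (1 - x) ^+ k <= 8^-1.
Proof.
move=> x01 kx_ge7; have := bernoulli_one_sub k x01.
have pow_ge0 : 0 <= (1 - x) ^+ k by rewrite exprn_ge0 // subr_ge0; case/andP: x01.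
set y := (1 - x) ^+ k in pow_ge0 *; move=> y_le.
have : y * 8 <= 1 by apply: le_trans y_le; rewrite ler_wpM2l //; lra.
lra.
Qed.

(* [r (eps^2/2) >= 7] gives [(1 - eps^2/2)^r <= 1/8], so with [q = 7 n r] the bound
   [(1 - eps^2/2)^q <= 8^(-7n)] beats the factor [4^n] coming from the [2^n] sequential tests. *)
Definition rounds eps n : nat := 7 * n * (Num.truncn (14 / eps ^+ 2)).+1.

Lemma rounds_le eps n : 0 < eps -> eps <= 1 ->
  (rounds eps n + rounds eps n)%:R <= 210 * n%:R / eps ^+ 2.
Proof.
move=> eps_gt0 eps_le1; set r := (Num.truncn (14 / eps ^+ 2)).+1.
have e2_gt0 : 0 < eps ^+ 2 by rewrite exprn_gt0.
have inv_ge1 : 1 <= (eps ^+ 2)^-1 by rewrite invr_ge1 ?unitfE ?gt_eqF // exprn_ile1 // ltW.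
have r_le : r%:R <= 15 * (eps ^+ 2)^-1.
  rewrite /r -natr1; apply: le_trans (_ : 14 / eps ^+ 2 + 1 <= _); last by lra.
  by rewrite lerD2r truncn_le divr_ge0 ?ltW.
have -> : (rounds eps n + rounds eps n)%:R = 14 * n%:R * r%:R :> R.
  by rewrite /rounds -/r natrD !natrM; ring.
apply: le_trans (_ : 14 * n%:R * (15 * (eps ^+ 2)^-1) <= _).
  by rewrite ler_wpM2l // mulr_ge0 // ler0n.
by rewrite le_eqVlt; apply/orP; left; apply/eqP; ring.
Qed.

Lemma rounds_suffice eps n : 0 < eps -> eps <= 1 -> (0 < n)%N ->
  200 * ((2 ^ n)%:R ^+ 2 * (1 - eps ^+ 2 / 2) ^+ rounds eps n) <= 1 / 1000.
Proof.
move=> eps_gt0 eps_le1 n_gt0; set r := (Num.truncn (14 / eps ^+ 2)).+1.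
set x := eps ^+ 2 / 2.
have e2_gt0 : 0 < eps ^+ 2 by rewrite exprn_gt0.
have e2_le1 : eps ^+ 2 <= 1 by rewrite exprn_ile1 // ltW.
have x01 : 0 <= x <= 1 by apply/andP; split; rewrite /x; lra.
have rx_ge7 : 7 <= r%:R * x.
  have : 14 / eps ^+ 2 < r%:R by apply: truncnS_gt.
  by rewrite ltr_pdivrMr // /x => ?; lra.
have pow_le : (1 - x) ^+ rounds eps n <= ((8^-1) ^+ 7) ^+ n.
  rewrite /rounds -/r -exprM mulnC exprM lerXn2r ?nnegrE ?exprn_ge0 ?invr_ge0 //.
    by rewrite subr_ge0; case/andP: x01.
  exact: one_sub_expr_le.
set c : R := 2 ^+ 2 * (8^-1) ^+ 7.
have c_ge0 : 0 <= c by rewrite mulr_ge0 ?exprn_ge0 ?invr_ge0.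
have c_small : 200 * c <= 1 / 1000 by rewrite /c !exprS expr0; lra.
have base : (2 ^ n)%:R ^+ 2 * ((8^-1) ^+ 7) ^+ n = c ^+ n :> R.
  by rewrite natrX -exprM mulnC exprM -exprMn.
have cn_le : c ^+ n <= c.
  case: n n_gt0 {pow_le base} => // k _; rewrite exprS ler_piMr ?exprn_ge0 //.
  by rewrite exprn_ile1 //; lra.
apply: le_trans c_small; rewrite ler_wpM2l //; apply: le_trans cn_le.
by rewrite -base ler_wpM2l ?exprn_ge0 ?ler0n.
Qed.

End Rounds.

Theorem theorem2p21 (R : realType) :
  exists K : R, 0 < K /\
  forall (n : nat) (eps : R), 0 < eps -> eps <= 1 ->
  exists (m : nat), m%:R <= K * n%:R / eps ^+ 2 /\
  exists E : {set 'I_n} -> copies_idx n m -> copies_idx n m -> complex R,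
    povm E /\
    forall (Cut : {set 'I_n}), Cut != set0 -> Cut != setT ->
    forall (a : qvec R (sub Cut)) (b : qvec R (sub (~: Cut))),
      is_state a -> is_state b ->
      far_from_product eps a -> far_from_product eps b ->
      (99%:R / 100%:R : complex R) <=
        outcome_prob E Cut (tensor_pow (m:=m) (tensor a b))
        + outcome_prob E (~: Cut) (tensor_pow (m:=m) (tensor a b)).
Proof.
exists 210; split => // n eps eps_gt0 eps_le1.
exists (rounds eps n + rounds eps n)%N; split; first exact: rounds_le.
exists (cut_povm (rounds eps n)); split; first exact: cut_povm_is_povm.
move=> Cut Cut0 CutT a b a_state b_state a_far b_far.
have n_gt0 : (0 < n)%N by case/set0Pn: Cut0 => -[i i_lt] _; apply: leq_ltn_trans i_lt.
apply: (cut_povm_success eps_gt0 eps_le1 Cut0 CutT a_state b_state a_far b_far).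
exact: rounds_suffice.
Qed.
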